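(* Let $\gamma>0$, $c_u>0$, $c_a>0$, $c_s>0$ and $R^*=\log\left(\frac{c_u}{c_a}+1\right)$. The bi-level game described in the context admits a unique bi-level game Nash equilibrium $(p_u^*,p_a^*,\{s^*,T^*\})$, namely $$(p_u^*,p_a^*,\{s^*,T^*\})=\left(0,\,0,\,\left\{1,\ \log\left(\tfrac{c_u}{c_a}+1\right)\right\}\right).$$
   Context: $\log$ is the natural logarithm. Lower level: given a coverage level $s\in[0,1]$, a user chooses $p_u\in[0,1]$ and an attacker $p_a\in[0,1]$ in a zero-sum game with objective $K(p_u,p_a,s)=\gamma(1-s)\log\left(\frac{p_a}{p_u}+1\right)+c_up_u-c_ap_a$ (user minimizes, attacker maximizes) on the feasible set $\mathcal{S}_{u,a}(s)=\{(p_u,p_a)\in[0,1]^2:1-\gamma(1-s)\log(p_a/p_u+1)>0\}$. Conventions: when $s=1$ the term $\gamma(1-s)\log(p_a/p_u+1)$ is taken to be $0$ (all pairs feasible); when $s<1$, pairs with $p_u=0$ are regarded infeasible. A pair $(p_u^*,p_a^* )\in\mathcal{S}_{u,a}(s)$ is a saddle-point equilibrium (SPE) if $K(p_u^*,p_a,s)\le K(p_u^*,p_a^*,s)\le K(p_u,p_a^*,s)$ for all $p_a$ with $(p_u^*,p_a)\in\mathcal{S}_{u,a}(s)$ and all $p_u$ with $(p_u,p_a^* )\in\mathcal{S}_{u,a}(s)$. Upper level: the insurer chooses $(s,T)$, $0\le s\le1$, $T\ge0$, to minimize $J_i(s,T)=\gamma(1-s)R^*+c_s(sR^*-T)$ subject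 to $T\le R^*$, $s\ge T/R^*$, $T-sR^*\ge0$, and $s>1-\frac{1}{\gamma R^*}$. A tuple $(p_u^*,p_a^*,\{s^*,T^*\})$ is a bi-level game Nash equilibrium (BGNE) if $(s^*,T^* )$ solves the insurer's problem and $(p_u^*,p_a^* )$ is an SPE of the zero-sum game at coverage level $s=s^*$. *)

From Stdlib Require Import Reals Lra.
Open Scope R_scope.

Definition Rstar (cu ca : R) : R := ln (cu / ca + 1).

(* Lower-level objective K(p_u,p_a,s).  When s = 1 the factor (1-s) is 0,
   so the log term is 0, matching the paper's convention. *)
Definition K (gamma cu ca pu pa s : R) : R :=
  gamma * (1 - s) * ln (pa / pu + 1) + cu * pu - ca * pa.

Definition feasible_ua (gamma s pu pa : R) : Prop :=
  0 <= pu <= 1 /\ 0 <= pa <= 1 /\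
  (s = 1 \/ (0 < pu /\ 1 - gamma * (1 - s) * ln (pa / pu + 1) > 0)).

Definition is_SPE (gamma cu ca s pu pa : R) : Prop :=
  feasible_ua gamma s pu pa /\
  (forall pa', feasible_ua gamma s pu pa' ->
     K gamma cu ca pu pa' s <= K gamma cu ca pu pa s) /\
  (forall pu', feasible_ua gamma s pu' pa ->
     K gamma cu ca pu pa s <= K gamma cu ca pu' pa s).

Definition J_ins (gamma cs Rs s T : R) : R :=
  gamma * (1 - s) * Rs + cs * (s * Rs - T).

Definition feasible_ins (gamma Rs s T : R) : Prop :=
  0 <= s <= 1 /\ 0 <= T /\ T <= Rs /\ s >= T / Rs /\ T - s * Rs >= 0 /\
  s > 1 - 1 / (gamma * Rs).

Definition insurer_opt (gamma cs Rs s T : R) : Prop :=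
  feasible_ins gamma Rs s T /\
  (forall s' T', feasible_ins gamma Rs s' T' ->
     J_ins gamma cs Rs s T <= J_ins gamma cs Rs s' T').

Definition is_BGNE (gamma cu ca cs pu pa s T : R) : Prop :=
  insurer_opt gamma cs (Rstar cu ca) s T /\ is_SPE gamma cu ca s pu pa.

(* Every feasible insurer policy has T = s R^* (the constraints T <= s R^* and
   T >= s R^* pin it down), so J_i reduces to gamma (1 - s) R^*, minimised
   only at full coverage s = 1.  At s = 1 the log term of K vanishes and the
   zero-sum game becomes linear, K = c_u p_u - c_a p_a, whose only saddle
   point on [0,1]^2 is (0, 0). *)
From Stdlib Require Import Reals Lra.
Open Scope R_scope.

Lemma Rstar_pos (cu ca : R) : 0 < cu -> 0 < ca -> 0 < Rstar cu ca.
Proof.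
  intros hu ha. unfold Rstar. rewrite <- ln_1.
  apply ln_increasing; [lra |].
  assert (0 < cu / ca) by (apply Rdiv_lt_0_compat; lra). lra.
Qed.

Section Insurer.

Variables gamma cs Rs : R.
Hypothesis gamma_pos : 0 < gamma.
Hypothesis Rs_pos : 0 < Rs.

Lemma feasible_ins_premium (s T : R) :
  feasible_ins gamma Rs s T -> T = s * Rs /\ s <= 1.
Proof.
  intros ([_ s_le1] & _ & _ & T_le & T_ge & _).
  assert (T <= s * Rs).
  { replace T with (T / Rs * Rs) by (field; lra).
    apply Rmult_le_compat_r; lra. }
  lra.
Qed.

Lemma feasible_ins_full_coverage : feasible_ins gamma Rs 1 Rs.
Proof.
  assert (0 < 1 / (gamma * Rs)).
  { apply Rdiv_lt_0_compat; [lra | apply Rmult_lt_0_compat; lra]. }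
  repeat split; try lra.
  replace (Rs / Rs) with 1 by (field; lra). lra.
Qed.

Lemma J_ins_feasible (s T : R) :
  feasible_ins gamma Rs s T -> J_ins gamma cs Rs s T = (1 - s) * (gamma * Rs).
Proof.
  intros hf. destruct (feasible_ins_premium s T hf) as [-> _].
  unfold J_ins. ring.
Qed.

Lemma insurer_opt_iff (s T : R) :
  insurer_opt gamma cs Rs s T <-> s = 1 /\ T = Rs.
Proof.
  assert (gR_pos : 0 < gamma * Rs) by (apply Rmult_lt_0_compat; lra).
  assert (J_full : J_ins gamma cs Rs 1 Rs = 0)
    by (rewrite (J_ins_feasible 1 Rs feasible_ins_full_coverage); ring).
  split.
  - intros [hf hopt].
    destruct (feasible_ins_premium s T hf) as [-> s_le1].
    specialize (hopt 1 Rs feasible_ins_full_coverage).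
    rewrite (J_ins_feasible s _ hf), J_full in hopt.
    assert (s = 1) by nra. subst s. split; ring.
  - intros [-> ->]. split; [exact feasible_ins_full_coverage |].
    intros s' T' hf. rewrite J_full, (J_ins_feasible s' T' hf).
    destruct (feasible_ins_premium s' T' hf) as [_ s'_le1].
    apply Rmult_le_pos; lra.
Qed.

End Insurer.

Lemma feasible_ua_full_coverage (gamma pu pa : R) :
  feasible_ua gamma 1 pu pa <-> 0 <= pu <= 1 /\ 0 <= pa <= 1.
Proof.
  unfold feasible_ua. split; [tauto | intros [hu ha]; auto].
Qed.

Lemma K_full_coverage (gamma cu ca pu pa : R) :
  K gamma cu ca pu pa 1 = cu * pu - ca * pa.
Proof. unfold K. ring. Qed.

Lemma is_SPE_full_coverage_iff (gamma cu ca pu pa : R) :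
  0 < cu -> 0 < ca -> is_SPE gamma cu ca 1 pu pa <-> pu = 0 /\ pa = 0.
Proof.
  intros hu ha. unfold is_SPE.
  setoid_rewrite feasible_ua_full_coverage.
  setoid_rewrite K_full_coverage.
  split.
  - intros ([pu_rng pa_rng] & attacker & user).
    assert (cu * pu - ca * 0 <= cu * pu - ca * pa) by (apply attacker; lra).
    assert (cu * pu - ca * pa <= cu * 0 - ca * pa) by (apply user; lra).
    split; nra.
  - intros [-> ->]. repeat split; try lra; intros p [? ?]; nra.
Qed.

Theorem proposition5 (gamma cu ca cs : R) :
  0 < gamma -> 0 < cu -> 0 < ca -> 0 < cs ->
  forall pu pa s T : R,
    is_BGNE gamma cu ca cs pu pa s T <->
    (pu = 0 /\ pa = 0 /\ s = 1 /\ T = ln (cu / ca + 1)).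
Proof.
  intros hg hu ha _ pu pa s T.
  unfold is_BGNE.
  rewrite (insurer_opt_iff gamma cs (Rstar cu ca) hg (Rstar_pos cu ca hu ha)).
  split.
  - intros [[-> ->] hspe].
    destruct (proj1 (is_SPE_full_coverage_iff gamma cu ca pu pa hu ha) hspe).
    auto.
  - intros (-> & -> & -> & ->).
    split; [split; reflexivity |].
    now apply is_SPE_full_coverage_iff.
Qed.
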